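(* For all integers $n\geq0$, $$s_1(n)+\sum_{j\geq1}(-1)^j\left(s_1(n-j(3j-2))+s_1(n-j(3j+2))\right)=s_2(n)+\sum_{j\geq1}(-1)^j\left(s_2(n-j(3j-1))+s_2(n-j(3j+1))\right)$$ and this common value equals $1$ if $n=6\,\frac{j(3j-1)}{2}$ for some even $j\in\mathbb{Z}$, equals $-1$ if $n=6\,\frac{j(3j-1)}{2}$ for some odd $j\in\mathbb{Z}$, and equals $0$ otherwise. (Explicitly, the sums are $s_1(n)-s_1(n-1)-s_1(n-5)+s_1(n-8)+s_1(n-16)-\cdots$ and $s_2(n)-s_2(n-2)-s_2(n-4)+s_2(n-10)+s_2(n-14)-\cdots$.)
   Context: $s_1(n)$ (resp. $s_2(n)$) is the number of partitions of $n$ all of whose parts are congruent to $\pm1$ (resp. $\pm2$) modulo $6$, with value $1$ at $n=0$ and $0$ at negative arguments. The numbers $j(3j-1)/2$, $j\in\mathbb{Z}$, are the generalized pentagonal numbers, distinct for distinct $j$. *)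

From mathcomp Require Import all_boot all_order all_algebra.
Set Implicit Arguments. Unset Strict Implicit. Unset Printing Implicit Defensive.
Import Order.TTheory GRing.Theory Num.Theory.

(* A partition of n is encoded by its multiplicity function m : part k has
   multiplicity m k (k ranges over 0..n, and part 0 is forbidden).  Multiplicities
   are bounded by n, which loses nothing since k * m k <= n for k >= 1. *)
Definition is_partition_with (P : nat -> bool) (n : nat)
  (m : {ffun 'I_n.+1 -> 'I_n.+1}) : bool :=
  [&& (nat_of_ord (m ord0) == 0)%N,
      (\sum_(k < n.+1) k * m k == n)%N &
      [forall k : 'I_n.+1, (0 < m k)%N ==> P k]].

Definition npart (P : nat -> bool) (n : nat) : nat :=
  #|[set m : {ffun 'I_n.+1 -> 'I_n.+1} | @is_partition_with P n m]|.

Definition P1 (k : nat) : bool := (k %% 6 == 1)%N || (k %% 6 == 5)%N.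
Definition P2 (k : nat) : bool := (k %% 6 == 2)%N || (k %% 6 == 4)%N.

(* extended to integer arguments: 0 at negative arguments; s(0) = 1 *)
Definition s1 (z : int) : int :=
  match z with Posz n => (npart P1 n)%:Z | Negz _ => 0 end.
Definition s2 (z : int) : int :=
  match z with Posz n => (npart P2 n)%:Z | Negz _ => 0 end.

(* Work in Z[X] modulo powers of X, with Q = X^6.  For P = {k = +-a mod 6}
   (a + b = 6, so {a, b} = {1, 5} or {2, 4}) the alternating sum is the n-th
   coefficient of theta_ab * prod_(k in P) 1/(1 - X^k), where
   theta_ab = sum_(j in Z) (-1)^j X^(6 C(j,2) + a j).  Since
   (X^a;Q)_oo (X^b;Q)_oo = prod_(k in P) (1 - X^k), the Jacobi triple product
   theta_ab = (Q;Q)_oo (X^a;Q)_oo (X^b;Q)_oo makes this the n-th coefficient of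
   (X^6;X^6)_oo, whatever {a, b} is; the triple product again, with Q = X^18
   (Euler's pentagonal theorem), expands (X^6;X^6)_oo as
   sum_(j in Z) (-1)^j X^(3j(3j-1)).
   The triple product itself is the limit of its finite form
   prod_(i<m) (1 + u Q^i) prod_(i<n) (1 + v Q^i) = sum_k [m+n, k]_Q Q^C(j,2) u^j
   (j = k - n, u v = Q), in which (Q;Q)_M [2M, k]_Q tends to 1. *)

From mathcomp Require Import all_boot all_order all_algebra.
From mathcomp Require Import zify ring.
Set Implicit Arguments. Unset Strict Implicit. Unset Printing Implicit Defensive.
Import Order.TTheory GRing.Theory Num.Theory.
Local Open Scope ring_scope.

Section TruncatedEquality.
Variable R : nzRingType.
Implicit Types (p q E : {poly R}) (N : nat).

Definition eqmodX N p q := take_poly N p = take_poly N q.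

Lemma eqmodX_coef N p q :
  eqmodX N p q <-> forall i, (i < N)%N -> p`_i = q`_i.
Proof.
split=> [pq i lt_iN | pq]; last first.
  by apply/polyP => i; rewrite !coef_take_poly; case: ifP => // /pq.
by have := congr1 (coefp i) pq; rewrite /= !coef_take_poly lt_iN.
Qed.

Lemma eqmodX_le N N' p q : (N' <= N)%N -> eqmodX N p q -> eqmodX N' p q.
Proof.
move=> le_N'N /eqmodX_coef pq; apply/eqmodX_coef => i lt_iN'.
by apply: pq; apply: leq_trans le_N'N.
Qed.

Lemma eqmodXD N p q p' q' :
  eqmodX N p q -> eqmodX N p' q' -> eqmodX N (p + p') (q + q').
Proof. by rewrite /eqmodX !take_polyD => -> ->. Qed.

Lemma eqmodXM N p q p' q' :
  eqmodX N p q -> eqmodX N p' q' -> eqmodX N (p * p') (q * q').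
Proof.
move=> /eqmodX_coef pq /eqmodX_coef pq'; apply/eqmodX_coef => i lt_iN.
rewrite !coefM; apply: eq_bigr => j _.
have lt_jN : (j < N)%N by apply: leq_ltn_trans lt_iN; rewrite -ltnS.
by rewrite pq // pq' //; apply: leq_ltn_trans lt_iN; apply: leq_subr.
Qed.

Lemma eqmodX_mulXnl N e p q :
  eqmodX N p q -> eqmodX (N + e) ('X^e * p) ('X^e * q).
Proof.
move=> /eqmodX_coef pq; apply/eqmodX_coef => i lt_iNe.
rewrite !coefXnM; case: ltnP => // le_ei.
by apply: pq; rewrite ltn_subLR // addnC.
Qed.

Lemma eqmodX_sum N (I : Type) (s : seq I) (F G : I -> {poly R}) :
  (forall i, eqmodX N (F i) (G i)) ->
  eqmodX N (\sum_(i <- s) F i) (\sum_(i <- s) G i).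
Proof. by move=> FG; rewrite /eqmodX !take_poly_sum; apply: eq_bigr => i _; apply: FG. Qed.

Lemma eqmodX_prod N (I : Type) (s : seq I) (F G : I -> {poly R}) :
  (forall i, eqmodX N (F i) (G i)) ->
  eqmodX N (\prod_(i <- s) F i) (\prod_(i <- s) G i).
Proof.
move=> FG; elim: s => [|i s IHs]; first by rewrite !big_nil.
by rewrite !big_cons; apply: eqmodXM.
Qed.

Lemma eqmodX_prod1 N (I : Type) (s : seq I) (F : I -> {poly R}) :
  (forall i, eqmodX N (F i) 1) -> eqmodX N (\prod_(i <- s) F i) 1.
Proof. by move=> F1; have := eqmodX_prod s F1; rewrite big1_eq. Qed.

Lemma eqmodX_1subXn N k : (N <= k)%N -> eqmodX N (1 - 'X^k) 1.
Proof.
move=> le_Nk; apply/eqmodX_coef => i lt_iN.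
by rewrite coefB coefXn ltn_eqF ?subr0 // (leq_trans lt_iN le_Nk).
Qed.

Lemma eqmodX_prod_widen N K0 K (F : nat -> {poly R}) :
  (K0 <= K)%N -> (forall i, (K0 <= i)%N -> eqmodX N (F i) 1) ->
  eqmodX N (\prod_(i < K) F i) (\prod_(i < K0) F i).
Proof.
move=> le_K0K F1; rewrite -(subnKC le_K0K) big_split_ord /=.
rewrite -[X in eqmodX _ _ X]mulr1; apply: eqmodXM => //.
by apply: eqmodX_prod1 => i; apply: F1; apply: leq_addr.
Qed.

Lemma eqmodX_mulIl N E p q :
  E`_0 = 1 -> eqmodX N (E * p) (E * q) -> eqmodX N p q.
Proof.
move=> E0 /eqmodX_coef Epq; apply/eqmodX_coef.
suff pq0 : forall i, (i < N)%N -> (p - q)`_i = 0.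
  by move=> i /pq0 /eqP; rewrite coefB subr_eq0 => /eqP.
elim/ltn_ind=> i IHi lt_iN.
have /eqP := Epq i lt_iN; rewrite -subr_eq0 -!coefB -mulrBr coefM big_ord_recl E0 mul1r.
rewrite subn0 big1 ?addr0 => [/eqP // | j _]; have lt_ji := ltn_ord j.
by rewrite IHi ?mulr0 // lift0; lia.
Qed.

End TruncatedEquality.

Section GaussianBinomial.
Variables (R : comNzRingType) (Q : R).

Fixpoint qbinom (n k : nat) {struct n} : R :=
  match n, k with
  | _, 0 => 1
  | 0, _.+1 => 0
  | n'.+1, k'.+1 => qbinom n' k' + Q ^+ k'.+1 * qbinom n' k'.+1
  end.

Definition qpoch (m : nat) : R := \prod_(i < m) (1 - Q ^+ i.+1).

Lemma qbinom_n0 n : qbinom n 0 = 1. Proof. by case: n. Qed.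

Lemma qbinomS n k : qbinom n.+1 k.+1 = qbinom n k + Q ^+ k.+1 * qbinom n k.+1.
Proof. by []. Qed.

Lemma qbinom_small n k : (n < k)%N -> qbinom n k = 0.
Proof. by elim: n k => [|n IHn] [|k] //= lt_nk; rewrite !IHn ?mulr0 ?addr0 // ltnW. Qed.

Lemma qbinom_nn n : qbinom n n = 1.
Proof. by elim: n => //= n ->; rewrite qbinom_small ?mulr0 ?addr0. Qed.

Lemma qpoch0 : qpoch 0 = 1. Proof. by rewrite /qpoch big_ord0. Qed.

Lemma qpochS m : qpoch m.+1 = qpoch m * (1 - Q ^+ m.+1).
Proof. by rewrite /qpoch big_ord_recr. Qed.

Lemma qbinom_fact n k :
  (k <= n)%N -> qpoch k * qpoch (n - k) * qbinom n k = qpoch n.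
Proof.
elim: n k => [|n IHn] [|k] //= le_kn; rewrite ?qpoch0 ?subn0 ?mul1r ?mulr1 //.
rewrite subSS mulrDr qpochS.
have left_term : qpoch k * (1 - Q ^+ k.+1) * qpoch (n - k) * qbinom n k
    = (1 - Q ^+ k.+1) * qpoch n.
  by rewrite -(IHn k le_kn); ring.
rewrite left_term; move: le_kn; rewrite ltnS leq_eqVlt => /orP [/eqP-> | lt_kn].
  by rewrite qbinom_small // !mulr0 addr0 qpochS; ring.
have right_term : qpoch k * (1 - Q ^+ k.+1) * qpoch (n - k) * (Q ^+ k.+1 * qbinom n k.+1)
    = Q ^+ k.+1 * (1 - Q ^+ (n - k)) * qpoch n.
  by rewrite -(IHn k.+1 lt_kn) -subnSK // !qpochS; ring.
rewrite right_term qpochS.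
have -> : Q ^+ n.+1 = Q ^+ k.+1 * Q ^+ (n - k) by rewrite -exprD addSn subnKC // ltnW.
ring.
Qed.

Variables u v : R.

(* Q^C(j,2) u^j for j = k - n, written as Q^C(-j,2) v^(-j) when j < 0 (u v = Q). *)
Definition jtp_weight (n k : nat) : R :=
  if (n <= k)%N then Q ^+ 'C(k - n, 2) * u ^+ (k - n)
  else Q ^+ 'C(n - k, 2) * v ^+ (n - k).

Lemma jtp_weight_ge n k :
  (n <= k)%N -> jtp_weight n k = Q ^+ 'C(k - n, 2) * u ^+ (k - n).
Proof. by rewrite /jtp_weight => ->. Qed.

Lemma jtp_weight_le n k :
  (k <= n)%N -> jtp_weight n k = Q ^+ 'C(n - k, 2) * v ^+ (n - k).
Proof. by rewrite /jtp_weight; case: ltngtP => // -> _; rewrite subnn. Qed.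

Lemma jtp_weightSS n k : jtp_weight n.+1 k.+1 = jtp_weight n k.
Proof. by rewrite /jtp_weight ltnS !subSS. Qed.

Lemma jtp_weight_mulv n k : (k <= n)%N ->
  jtp_weight n k * (v * Q ^+ n) = Q ^+ k * jtp_weight n.+1 k.
Proof.
move=> le_kn; rewrite !jtp_weight_le ?(leqW le_kn) // subSn // binS bin1.
have -> : Q ^+ n = Q ^+ k * Q ^+ (n - k) by rewrite -exprD subnKC.
by rewrite exprD exprS; ring.
Qed.

Lemma qbinomial_theorem n :
  \prod_(i < n) (1 + v * Q ^+ i) = \sum_(k < n.+1) qbinom n k * jtp_weight n k.
Proof.
elim: n => [|n IHn].
  by rewrite big_ord0 big_ord1 qbinom_n0 /jtp_weight leqnn subnn !expr0 !mul1r.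
rewrite big_ord_recr IHn [RHS]big_ord_recl qbinom_n0 mul1r.
under [in RHS]eq_bigr => k _ do rewrite lift0 qbinomS jtp_weightSS mulrDl.
rewrite big_split /= addrCA mulrDr mulr1; congr (_ + _).
have shifted : \sum_(k < n.+2) Q ^+ k * qbinom n k * jtp_weight n.+1 k
    = jtp_weight n.+1 0 + \sum_(k < n.+1) Q ^+ k.+1 * qbinom n k.+1 * jtp_weight n k.
  by rewrite big_ord_recl expr0 qbinom_n0 !mul1r.
rewrite -shifted [RHS]big_ord_recr /= qbinom_small // mulr0 mul0r addr0 mulr_suml.
apply: eq_bigr => k _; have le_kn : (k <= n)%N := ltn_ord k.
by rewrite -mulrA jtp_weight_mulv // mulrCA mulrA.
Qed.

Hypothesis uvQ : u * v = Q.

Lemma jtp_weight_mulu m n k : (k <= m + n)%N ->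
  jtp_weight n k * (u * Q ^+ m) = Q ^+ (m + n - k) * jtp_weight n k.+1.
Proof.
move=> le_k_mn; case: (leqP n k) => [le_nk | lt_kn].
  rewrite !jtp_weight_ge ?(leqW le_nk) // subSn // binS bin1.
  have -> : Q ^+ m = Q ^+ (m + n - k) * Q ^+ (k - n) by rewrite -exprD; congr (_ ^+ _); lia.
  by rewrite exprD exprS; ring.
rewrite (jtp_weight_le (ltnW lt_kn)) (jtp_weight_le lt_kn) -(subnSK lt_kn) binS bin1.
have -> : (m + n - k = m + (n - k.+1) + 1)%N by lia.
by rewrite -uvQ !exprD exprS; ring.
Qed.

End GaussianBinomial.

Lemma qpoch_trisect (R : comNzRingType) (Q : R) M :
  qpoch (Q ^+ 3) M * (\prod_(i < M) (1 - Q * (Q ^+ 3) ^+ i)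
                      * \prod_(i < M) (1 - Q ^+ 2 * (Q ^+ 3) ^+ i))
  = qpoch Q (3 * M).
Proof.
elim: M => [|M IHM]; first by rewrite !big_ord0 muln0 !qpoch0 !mulr1.
have e3 : (3 * M.+1 = (3 * M).+3)%N by lia.
have e2 : (2 + 3 * M = (3 * M).+2)%N by lia.
by rewrite e3 !qpochS -IHM !big_ord_recr /= -!exprM -exprS -exprD e3 e2; ring.
Qed.

Section FiniteTripleProduct.
Variables (R : idomainType) (Q u v : R).
Hypothesis qpoch_neq0 : forall m, qpoch Q m != 0.

Lemma qbinomSr n k : (k <= n)%N ->
  qbinom Q n.+1 k.+1 = Q ^+ (n - k) * qbinom Q n k + qbinom Q n k.+1.
Proof.
rewrite leq_eqVlt => /predU1P [-> | lt_kn].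
  by rewrite subnn expr0 mul1r !qbinom_nn qbinom_small ?addr0.
apply: (mulfI (qpoch_neq0 k.+1)); apply: (mulfI (qpoch_neq0 (n - k))).
have fact_Sn := qbinom_fact Q (ltnW lt_kn : (k.+1 <= n.+1)%N).
have fact_k := qbinom_fact Q (ltnW lt_kn).
have fact_Sk := qbinom_fact Q lt_kn.
rewrite subSS in fact_Sn.
have -> : qpoch Q (n - k) * (qpoch Q k.+1 * qbinom Q n.+1 k.+1) = qpoch Q n.+1.
  by rewrite -fact_Sn; ring.
rewrite !mulrDr.
have -> : qpoch Q (n - k) * (qpoch Q k.+1 * (Q ^+ (n - k) * qbinom Q n k))
    = Q ^+ (n - k) * (1 - Q ^+ k.+1) * qpoch Q n.
  by rewrite -fact_k qpochS; ring.
have -> : qpoch Q (n - k) * (qpoch Q k.+1 * qbinom Q n k.+1)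
    = (1 - Q ^+ (n - k)) * qpoch Q n.
  by rewrite -subnSK // qpochS -fact_Sk; ring.
rewrite qpochS.
have -> : Q ^+ n.+1 = Q ^+ (n - k) * Q ^+ k.+1 by rewrite -exprD addnS subnK // ltnW.
ring.
Qed.

Hypothesis uvQ : u * v = Q.

Lemma finite_triple_product m n :
  \prod_(i < m) (1 + u * Q ^+ i) * \prod_(i < n) (1 + v * Q ^+ i)
  = \sum_(k < (m + n).+1) qbinom Q (m + n) k * jtp_weight Q u v n k.
Proof.
elim: m => [|m IHm]; first by rewrite big_ord0 mul1r (qbinomial_theorem Q u).
rewrite big_ord_recr mulrAC IHm addSn; set N := (m + n)%N.
have expand_Sn : \sum_(k < N.+2) qbinom Q N.+1 k * jtp_weight Q u v n k
    = jtp_weight Q u v n 0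
      + \sum_(k < N.+1) Q ^+ (N - k) * qbinom Q N k * jtp_weight Q u v n k.+1
      + \sum_(k < N.+1) qbinom Q N k.+1 * jtp_weight Q u v n k.+1.
  rewrite big_ord_recl qbinom_n0 mul1r -addrA -big_split; congr (_ + _).
  by apply: eq_bigr => k _; rewrite lift0 qbinomSr ?mulrDl // -ltnS.
have shift_N : \sum_(k < N.+1) qbinom Q N k * jtp_weight Q u v n k
    = jtp_weight Q u v n 0 + \sum_(k < N.+1) qbinom Q N k.+1 * jtp_weight Q u v n k.+1.
  rewrite big_ord_recl qbinom_n0 mul1r; congr (_ + _).
  by rewrite [RHS]big_ord_recr /= qbinom_small // mul0r addr0.
have mul_u : (\sum_(k < N.+1) qbinom Q N k * jtp_weight Q u v n k) * (u * Q ^+ m)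
    = \sum_(k < N.+1) Q ^+ (N - k) * qbinom Q N k * jtp_weight Q u v n k.+1.
  rewrite mulr_suml; apply: eq_bigr => k _; have le_kN : (k <= m + n)%N := ltn_ord k.
  by rewrite -mulrA jtp_weight_mulu // mulrCA mulrA.
by rewrite mulrDr mulr1 expand_Sn mul_u {1}shift_N; ring.
Qed.

End FiniteTripleProduct.

Section TripleProductSeries.
Variable R : idomainType.

Lemma coef0_qpochXn c m : (0 < c)%N -> (qpoch ('X^c : {poly R}) m)`_0 = 1.
Proof.
move=> c_gt0; rewrite coef0_prod big1 // => i _.
by rewrite coefB coef1 -exprM coefXn eqxx ltn_eqF ?subr0 // muln_gt0 c_gt0.
Qed.

Lemma qpochXn_neq0 c m : (0 < c)%N -> qpoch ('X^c : {poly R}) m != 0.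
Proof.
move=> c_gt0; apply: contra_neq (oner_neq0 R) => qpoch0.
by rewrite -(coef0_qpochXn m c_gt0) qpoch0 coef0.
Qed.

Lemma qpochXn_eqmodX c T j : (0 < c)%N -> (T <= j)%N ->
  eqmodX T.+1 (qpoch ('X^c : {poly R}) j) (qpoch 'X^c T).
Proof.
move=> c_gt0 le_Tj; apply: (eqmodX_prod_widen (F := fun i => 1 - 'X^c ^+ i.+1)) => // i le_Ti.
by rewrite -exprM; apply: eqmodX_1subXn; rewrite (leq_trans _ (leq_pmull _ c_gt0)).
Qed.

Lemma qpoch_qbinom_eqmodX c M k : (0 < c)%N -> (k <= M + M)%N ->
  eqmodX (minn k (M + M - k)).+1
    (qpoch ('X^c : {poly R}) M * qbinom 'X^c (M + M) k) 1.
Proof.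
move=> c_gt0 le_k2M; set T := minn k (M + M - k); set Q : {poly R} := 'X^c.
have le_TM : (T <= M)%N by rewrite /T; lia.
have fact_k := qbinom_fact Q le_k2M.
apply: (eqmodX_mulIl (coef0_qpochXn T c_gt0)); rewrite mulr1.
apply: etrans (qpochXn_eqmodX c_gt0 (leq_trans le_TM (leq_addr M M))).
have le_Tk : (T <= k)%N by apply: geq_minl.
have le_T2Mk : (T <= M + M - k)%N by apply: geq_minr.
rewrite -fact_k !mulrA; apply: eqmodXM => //.
apply: eqmodXM; first exact/esym/qpochXn_eqmodX.
apply: etrans (qpochXn_eqmodX c_gt0 le_TM) _.
exact/esym/qpochXn_eqmodX.
Qed.

Definition theta_exp (c a d : nat) : nat := (c * 'C(d, 2) + a * d)%N.

(* Truncation to |j| <= M of sum_(j in Z) (-1)^j X^((a + b) j(j-1)/2 + a j);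
   the term j = -d is (-1)^d X^(theta_exp (a + b) b d). *)
Definition theta (a b M : nat) : {poly R} :=
  1 + \sum_(d < M) (-1) ^+ d.+1 *
        ('X^(theta_exp (a + b) a d.+1) + 'X^(theta_exp (a + b) b d.+1)).

Lemma theta_exp_ge c a d : (0 < a)%N -> (d <= theta_exp c a d)%N.
Proof. by move=> a_gt0; rewrite /theta_exp (leq_trans (leq_pmull d a_gt0)) ?leq_addl. Qed.

Local Notation weight a b := (jtp_weight ('X^(a + b) : {poly R}) (- 'X^a) (- 'X^b)).

Lemma jtp_weightX_ge a b M k : (M <= k)%N ->
  weight a b M k = (-1) ^+ (k - M) * 'X^(theta_exp (a + b) a (k - M)).
Proof.
by move=> le_Mk; rewrite jtp_weight_ge // (exprNn ('X^a)) -!exprM exprD mulrCA.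
Qed.

Lemma jtp_weightX_le a b M k : (k <= M)%N ->
  weight a b M k = (-1) ^+ (M - k) * 'X^(theta_exp (a + b) b (M - k)).
Proof.
by move=> le_kM; rewrite jtp_weight_le // (exprNn ('X^b)) -!exprM exprD mulrCA.
Qed.

Lemma sum_jtp_weightX a b M :
  \sum_(k < (M + M).+1) weight a b M k = theta a b M.
Proof.
rewrite -addnS big_split_ord big_ord_recl (reindex_inj rev_ord_inj) /=.
rewrite addn0 jtp_weightX_ge // subnn /theta_exp bin0n !muln0 !expr0 mul1r.
rewrite addrCA /theta -big_split /=; congr (_ + _); apply: eq_bigr => d _.
rewrite jtp_weightX_le ?leq_subr // jtp_weightX_ge ?leq_addr // subKn // addKn.
by rewrite mulrDr addrC.
Qed.

Lemma theta_eqmodX a b M : (0 < a)%N -> (0 < b)%N ->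
  eqmodX M.+1
    (qpoch 'X^(a + b) M * (\prod_(i < M) (1 - 'X^a * 'X^(a + b) ^+ i)
                         * \prod_(i < M) (1 - 'X^b * 'X^(a + b) ^+ i)))
    (theta a b M).
Proof.
move=> a_gt0 b_gt0; have c_gt0 : (0 < a + b)%N by rewrite addn_gt0 a_gt0.
have oppX (x : {poly R}) : \prod_(i < M) (1 - x * 'X^(a + b) ^+ i)
    = \prod_(i < M) (1 + (- x) * 'X^(a + b) ^+ i).
  by apply: eq_bigr => i _; rewrite mulNr.
rewrite !oppX finite_triple_product; first last.
- by rewrite mulrNN -exprD.
- by move=> m; apply: qpochXn_neq0.
rewrite -sum_jtp_weightX mulr_sumr; apply: eqmodX_sum => k.
have le_k2M : (k <= M + M)%N := ltn_ord k.
set T := minn k (M + M - k).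
have [s [e [-> le_M_Te]]] : exists s e, weight a b M k = s * 'X^e /\ (M <= T + e)%N.
  have [le_Mk | lt_kM] := leqP M k.
    exists ((-1) ^+ (k - M)), (theta_exp (a + b) a (k - M)).
    rewrite jtp_weightX_ge //; split=> //.
    by have := theta_exp_ge (a + b) (k - M) a_gt0; lia.
  exists ((-1) ^+ (M - k)), (theta_exp (a + b) b (M - k)).
  rewrite jtp_weightX_le ?(ltnW lt_kM); split=> //.
  by have := theta_exp_ge (a + b) (M - k) b_gt0; lia.
have := eqmodX_mulXnl e (eqmodXM (erefl (take_poly _ s)) (qpoch_qbinom_eqmodX c_gt0 le_k2M)).
move/(eqmodX_le (le_M_Te : (M.+1 <= T.+1 + e)%N)).
set P := qpoch _ M; set B := qbinom _ _ k.
have -> : P * (B * (s * 'X^e)) = 'X^e * (s * (P * B)) by ring.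
by rewrite (mulrC s 'X^e) mulr1.
Qed.

Lemma theta_S_eqmodX a b n : (0 < a)%N -> (0 < b)%N ->
  eqmodX n.+1 (theta a b n.+1 : {poly R}) (theta a b n).
Proof.
move=> a_gt0 b_gt0; rewrite /theta big_ord_recr /= addrA.
rewrite -[X in eqmodX _ _ X]addr0; apply: eqmodXD => //; apply/eqmodX_coef => i lt_in.
rewrite coef0 mulrDr coefD !coefMXn !(leq_trans lt_in) ?mulr0 ?addr0 //;
  exact: theta_exp_ge.
Qed.

Lemma coef_theta_mul a b n (S : {poly R}) :
  (theta a b n * S)`_n = S`_n + \sum_(1 <= j < n.+1) (-1) ^+ j *
    (('X^(theta_exp (a + b) a j) * S)`_n + ('X^(theta_exp (a + b) b j) * S)`_n).
Proof.
rewrite /theta mulrDl mul1r coefD mulr_suml coef_sum big_add1 big_mkord /=.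
congr (_ + _); apply: eq_bigr => d _.
by rewrite -mulrA -[in LHS]signr_odd -[in RHS]signr_odd !mulr_sign; case: odd;
  rewrite ?coefN mulrDl coefD ?opprD.
Qed.

End TripleProductSeries.

Arguments theta {R}.

Lemma prod_residue_classes (R : comNzRingType) (P : pred nat) c a b M :
  (a < c)%N -> (b < c)%N -> a != b ->
  (forall m r, (r < c)%N -> P (c * m + r)%N = (r == a) || (r == b)) ->
  \prod_(i < M) (1 - 'X^a * 'X^c ^+ i) * \prod_(i < M) (1 - 'X^b * 'X^c ^+ i)
  = \prod_(k < c * M | P k) (1 - 'X^k : {poly R}).
Proof.
move=> lt_ac lt_bc neq_ab P_mod; elim: M => [|M IHM].
  by rewrite !big_ord0 muln0 big_ord0 mulr1.
rewrite !big_ord_recr /= mulnS addnC big_split_ord -IHM /=.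
rewrite (bigD1 (Ordinal lt_ac)) /= ?P_mod ?eqxx //.
rewrite (big_pred1 (Ordinal lt_bc)) => [|r]; last first.
  rewrite /= P_mod // -!val_eqE /=.
  by case: eqVneq => [->|]; rewrite ?andbF ?(negbTE neq_ab) ?andbT.
rewrite -!exprM -!exprD /= ![(_ + c * M)%N]addnC; ring.
Qed.

Section PartitionSeries.
Variable P : pred nat.
Hypothesis P0 : P 0%N = false.

(* Expanding partgen N yields one monomial per multiplicity function
   f : 'I_N.+1 -> 'I_N.+1, which is how npart encodes partitions; parts outside
   P only contribute with multiplicity 0. *)
Definition part_term (k m : nat) : {poly int} :=
  if P k then 'X^(k * m) else (m == 0)%:R.

Definition partgen (N : nat) : {poly int} :=
  \prod_(k < N.+1) \sum_(m < N.+1) part_term k m.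

Definition partden (N : nat) : {poly int} := \prod_(k < N.+1 | P k) (1 - 'X^k).

Definition npartz (z : int) : int := if z is Posz n then (npart P n)%:Z else 0.

Lemma prod_part_term n (f : {ffun 'I_n.+1 -> 'I_n.+1}) :
  \prod_(k < n.+1) part_term k (f k) =
  if [forall k, (0 < f k)%N ==> P k] then 'X^(\sum_(k < n.+1) k * f k)%N else 0.
Proof.
case: ifP => [/forallP f_P | /negbT].
  rewrite (big_morph _ (@exprD _ 'X) (expr0 'X)); apply: eq_bigr => k _.
  rewrite /part_term; case: ifP => // /negbT Pk.
  by move: (f_P k); rewrite (negbTE Pk) implybF -eqn0Ngt => /eqP->; rewrite muln0.
rewrite negb_forall => /existsP [k]; rewrite negb_imply => /andP [f_k_gt0 notPk].
by rewrite (bigD1 k) //= /part_term (negbTE notPk) eqn0Ngt f_k_gt0 mul0r.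
Qed.

Lemma coef_partgen_diag n : (partgen n)`_n = (npart P n)%:Z.
Proof.
rewrite /partgen bigA_distr_bigA coef_sum /npart -sum1_card -natz natr_sum [RHS]big_mkcond /=.
apply: eq_bigr => f _; rewrite prod_part_term inE /is_partition_with.
case: ifP => [f_P | _]; last by rewrite coef0 !andbF.
rewrite coefXn andbT eq_sym.
have f0 : (nat_of_ord (f ord0) == 0)%N.
  apply: contraFT P0; rewrite -lt0n => f0_gt0.
  by move/forallP: f_P => /(_ ord0) /implyP; apply.
by rewrite f0; case: (_ == _).
Qed.

Lemma partgen_partden_eqmodX N : eqmodX N.+1 (partgen N * partden N) 1.
Proof.
rewrite /partden big_mkcond -big_split /=.
apply: eqmodX_prod1 => k.
rewrite /part_term; case: ifP => Pk; last by rewrite mulr1 big_ord_recl big1 ?addr0.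
have k_gt0 : (0 < k)%N by case: (nat_of_ord k) Pk; rewrite ?P0.
under eq_bigr => m _ do rewrite exprM.
rewrite mulrC -opprB mulNr -subrX1 opprB -exprM; apply: eqmodX_1subXn.
by rewrite mulnC leq_pmulr.
Qed.

Lemma coef0_partden N : (partden N)`_0 = 1.
Proof.
rewrite coef0_prod big1 // => k Pk.
by rewrite coefB coef1 coefXn eq_sym; case: (nat_of_ord k) Pk; rewrite ?P0 ?subr0.
Qed.

Lemma prod_1subXn_eqmodX n K : (n < K)%N ->
  eqmodX n.+1 (\prod_(k < K | P k) (1 - 'X^k)) (partden n).
Proof.
move=> lt_nK; rewrite /partden big_mkcond [X in eqmodX _ _ X]big_mkcond /=.
apply: (eqmodX_prod_widen (F := fun k => if P k then 1 - 'X^k else 1)) => // k le_Sn_k.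
by case: ifP => // _; apply: eqmodX_1subXn.
Qed.

Lemma partgen_eqmodX n N : (n <= N)%N -> eqmodX n.+1 (partgen N) (partgen n).
Proof.
move=> le_nN; apply: (eqmodX_mulIl (coef0_partden n)); rewrite ![partden n * _]mulrC.
have le_SnSN : (n.+1 <= N.+1)%N by [].
rewrite /eqmodX (partgen_partden_eqmodX n) -(eqmodX_le le_SnSN (partgen_partden_eqmodX N)).
by apply: eqmodXM => //; apply/esym/prod_1subXn_eqmodX.
Qed.

Lemma coef_partgen m N : (m <= N)%N -> (partgen N)`_m = (npart P m)%:Z.
Proof.
by move=> le_mN; have /eqmodX_coef-> := partgen_eqmodX le_mN; rewrite ?coef_partgen_diag.
Qed.

Lemma coef_Xn_partgen n e : ('X^e * partgen n)`_n = npartz (n%:Z - e%:Z).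
Proof.
rewrite coefXnM; case: ltnP => [lt_ne | le_en]; last by rewrite subzn // coef_partgen ?leq_subr.
have [d ->] : exists d, e = (n + d.+1)%N by exists (e - n.+1)%N; lia.
by rewrite PoszD opprD addrA subrr add0r -NegzE.
Qed.

End PartitionSeries.

Section ResidueClassPartitions.
Variables (P : pred nat) (a b : nat).
Hypotheses (P0 : P 0%N = false) (a_gt0 : (0 < a)%N) (b_gt0 : (0 < b)%N) (neq_ab : a != b).
Hypothesis P_mod : forall m r, (r < a + b)%N -> P ((a + b) * m + r)%N = (r == a) || (r == b).

Lemma coef_theta_partgen n :
  (theta a b n * partgen P n)`_n = npartz P n%:Z + \sum_(1 <= j < n.+1) (-1) ^+ j *
    (npartz P (n%:Z - (theta_exp (a + b) a j)%:Z)
     + npartz P (n%:Z - (theta_exp (a + b) b j)%:Z)).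
Proof.
rewrite coef_theta_mul coef_partgen //; congr (_ + _).
by apply: eq_bigr => j _; rewrite !coef_Xn_partgen.
Qed.

Lemma theta_partgen_eqmodX n :
  eqmodX n.+1 (theta a b n * partgen P n) (qpoch 'X^(a + b) n.+1).
Proof.
have lt_a_ab : (a < a + b)%N by rewrite -{1}[a]addn0 ltn_add2l.
have lt_b_ab : (b < a + b)%N by rewrite -{1}[b]add0n ltn_add2r.
have jtp := theta_eqmodX int n.+1 a_gt0 b_gt0.
rewrite (@prod_residue_classes int P _ a b n.+1 lt_a_ab lt_b_ab neq_ab P_mod) in jtp.
have theta_n : eqmodX n.+1 (theta a b n) (qpoch 'X^(a + b) n.+1 * partden P n).
  rewrite /eqmodX -(@theta_S_eqmodX int a b n a_gt0 b_gt0) -(eqmodX_le (leqnSn n.+1) jtp).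
  apply: eqmodXM => //; apply: prod_1subXn_eqmodX.
  by rewrite (leq_trans _ (leq_pmull _ _)) ?addn_gt0 ?a_gt0.
apply: etrans (eqmodXM theta_n (erefl (take_poly n.+1 (partgen P n)))) _.
rewrite -mulrA -[qpoch _ _ in RHS]mulr1; apply: eqmodXM => //.
by rewrite mulrC; apply: partgen_partden_eqmodX.
Qed.

Lemma alternating_npart_sum n :
  npartz P n%:Z + \sum_(1 <= j < n.+1) (-1) ^+ j *
    (npartz P (n%:Z - (theta_exp (a + b) a j)%:Z)
     + npartz P (n%:Z - (theta_exp (a + b) b j)%:Z))
  = (qpoch 'X^(a + b) n.+1)`_n.
Proof. by rewrite -coef_theta_partgen; have /eqmodX_coef-> := theta_partgen_eqmodX n. Qed.

End ResidueClassPartitions.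

Lemma theta_6_12_eqmodX n : eqmodX n.+1 (theta 6 12 n : {poly int}) (qpoch 'X^6 n.+1).
Proof.
have six_gt0 : (0 < 6)%N by [].
have jtp := theta_eqmodX int n.+1 six_gt0 (isT : (0 < 12)%N).
have X18 : 'X^(6 + 12) = ('X^6) ^+ 3 :> {poly int} by rewrite -exprM.
have X12 : 'X^12 = ('X^6) ^+ 2 :> {poly int} by rewrite -exprM.
rewrite X18 X12 qpoch_trisect in jtp.
rewrite /eqmodX -(@theta_S_eqmodX int 6 12 n isT isT) -(eqmodX_le (leqnSn n.+1) jtp).
have le_n3n : (n <= 3 * n.+1)%N by lia.
by rewrite (qpochXn_eqmodX _ six_gt0 le_n3n) (qpochXn_eqmodX _ six_gt0 (leqnSn n)).
Qed.

Lemma theta_expZ c a j :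
  (theta_exp c.*2 a j)%:Z = j%:Z * (c%:Z * (j%:Z - 1) + a%:Z).
Proof.
have bin2Z : (2 * 'C(j, 2))%:Z = j%:Z * (j%:Z - 1).
  by case: j => // j; rewrite mulnC (bin_ffact j.+1 2) ffactnS ffactn1 PoszM intS addrC addrK.
by rewrite /theta_exp -mul2n -mulnA mulnCA PoszD PoszM bin2Z PoszM; ring.
Qed.

(* Six times the generalized pentagonal number j(3j-1)/2. *)
Definition pent6 (j : int) : int := 3 * (j * (3 * j - 1)).

Lemma pent6_inj : injective pent6.
Proof.
move=> x y; rewrite /pent6 => /eqP; rewrite -subr_eq0.
have -> : 3 * (x * (3 * x - 1)) - 3 * (y * (3 * y - 1)) = 3 * ((x - y) * (3 * (x + y) - 1)).
  by ring.
rewrite !mulf_eq0 subr_eq0 => /orP [// | /orP [/eqP // | /eqP]]; lia.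
Qed.

Lemma pent6_ge j : (`|j|%N%:Z <= pent6 j)%R.
Proof. by case: j => m; rewrite /pent6 ?NegzE /=; nia. Qed.

Lemma coef_theta_6_12 n : (theta 6 12 n : {poly int})`_n =
  (n%:Z == pent6 0)%:R + \sum_(1 <= d < n.+1) (-1) ^+ d *
    ((n%:Z == pent6 d%:Z)%:R + (n%:Z == pent6 (- d%:Z))%:R).
Proof.
rewrite -[theta 6 12 n]mulr1 coef_theta_mul coef1; congr (_ + _).
apply: eq_bigr => d _; rewrite !mulr1 !coefXn -!eqz_nat.
by rewrite (theta_expZ 9 6) (theta_expZ 9 12) /pent6; congr (_ * (_%:R + _%:R));
  congr (_ == _); ring.
Qed.

Lemma coef_theta_6_12_pent n j :
  n%:Z = pent6 j -> (theta 6 12 n : {poly int})`_n = (-1) ^+ `|j|.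
Proof.
move=> def_n; have le_jn : (`|j| <= n)%N by rewrite -lez_nat def_n pent6_ge.
have pent_eq k : (n%:Z == pent6 k) = (j == k) by rewrite def_n (inj_eq pent6_inj).
rewrite coef_theta_6_12 pent_eq.
have sign_pair d : (0 < d)%N -> ((j == d%:Z)%:R + (j == - d%:Z)%:R : int) = (`|j| == d)%:R.
  move=> d_gt0; case: j {def_n le_jn pent_eq} => m.
    by rewrite eqz_nat (_ : (Posz m == - d%:Z) = false) ?addr0 //; apply/negbTE/eqP; lia.
  by rewrite NegzE eqr_opp eqz_nat (_ : (- m.+1%:Z == d%:Z) = false) ?add0r //;
    apply/negbTE/eqP; lia.
under eq_big_nat => d /andP [d_gt0 _] do rewrite !pent_eq sign_pair // mulr_natr mulrb eq_sym.
rewrite -big_mkcond big_nat1_eq.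
have [-> | j_neq0] := eqVneq j 0; first by rewrite ltnn.
by rewrite absz_gt0 j_neq0 ltnS le_jn add0r.
Qed.

Lemma coef_theta_6_12_nonpent n :
  (forall j, n%:Z <> pent6 j) -> (theta 6 12 n : {poly int})`_n = 0.
Proof.
move=> nonpent; have pent_eq k : (n%:Z == pent6 k) = false by apply/negbTE/eqP.
by rewrite coef_theta_6_12 pent_eq add0r big1 // => d _; rewrite !pent_eq addr0 mulr0.
Qed.

Lemma P1_mod m r : (r < 1 + 5)%N -> P1 ((1 + 5) * m + r)%N = (r == 1%N) || (r == 5%N).
Proof. by move=> lt_r6; rewrite /P1 mulnC modnMDl modn_small. Qed.

Lemma P2_mod m r : (r < 2 + 4)%N -> P2 ((2 + 4) * m + r)%N = (r == 2%N) || (r == 4%N).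
Proof. by move=> lt_r6; rewrite /P2 mulnC modnMDl modn_small. Qed.

Lemma alternating_s1_sum n :
  s1 n%:Z + \sum_(1 <= j < n.+1)
    (-1) ^+ j * (s1 (n%:Z - j%:Z * (3 * j%:Z - 2)) + s1 (n%:Z - j%:Z * (3 * j%:Z + 2)))
  = (theta 6 12 n : {poly int})`_n.
Proof.
have /eqmodX_coef-> // := theta_6_12_eqmodX n.
rewrite -(@alternating_npart_sum P1 1 5 erefl isT isT isT P1_mod n).
congr (_ + _); apply: eq_bigr => j _; rewrite (theta_expZ 3 1) (theta_expZ 3 5).
by congr (_ * (s1 (_ - _) + s1 (_ - _))); ring.
Qed.

Lemma alternating_s2_sum n :
  s2 n%:Z + \sum_(1 <= j < n.+1)
    (-1) ^+ j * (s2 (n%:Z - j%:Z * (3 * j%:Z - 1)) + s2 (n%:Z - j%:Z * (3 * j%:Z + 1)))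
  = (theta 6 12 n : {poly int})`_n.
Proof.
have /eqmodX_coef-> // := theta_6_12_eqmodX n.
rewrite -(@alternating_npart_sum P2 2 4 erefl isT isT isT P2_mod n).
congr (_ + _); apply: eq_bigr => j _; rewrite (theta_expZ 3 2) (theta_expZ 3 4).
by congr (_ * (s2 (_ - _) + s2 (_ - _))); ring.
Qed.

Lemma pent6E n j : 2 * n%:Z = 6 * (j * (3 * j - 1)) <-> n%:Z = pent6 j.
Proof.
rewrite /pent6; split=> [eq2 | ->]; last by ring.
by apply: (@mulfI _ 2) => //; rewrite eq2; ring.
Qed.

Unset Implicit Arguments.

Theorem corollary2 (n : nat) :
  let L := s1 n%:Z + \sum_(1 <= j < n.+1)
             (-1) ^+ j * (s1 (n%:Z - j%:Z * (3 * j%:Z - 2))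
                        + s1 (n%:Z - j%:Z * (3 * j%:Z + 2))) in
  let R := s2 n%:Z + \sum_(1 <= j < n.+1)
             (-1) ^+ j * (s2 (n%:Z - j%:Z * (3 * j%:Z - 1))
                        + s2 (n%:Z - j%:Z * (3 * j%:Z + 1))) in
  L = R /\
  ((exists j : int, (2 %| j)%Z /\ 2 * n%:Z = 6 * (j * (3 * j - 1))) -> L = 1) /\
  ((exists j : int, ~~ (2 %| j)%Z /\ 2 * n%:Z = 6 * (j * (3 * j - 1))) -> L = -1) /\
  ((forall j : int, 2 * n%:Z <> 6 * (j * (3 * j - 1))) -> L = 0).
Proof.
move=> L R.
have L_theta : L = (theta 6 12 n)`_n by rewrite /L alternating_s1_sum.
split; first by rewrite L_theta /R alternating_s2_sum.
rewrite L_theta; split; [|split]; first 2 last.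
- by move=> nonpent; rewrite coef_theta_6_12_nonpent // => j /pent6E /nonpent.
- case=> j [j_even /pent6E /coef_theta_6_12_pent->].
  by rewrite -signr_odd; move: j_even; rewrite dvdzE dvdn2 => /negbTE->.
case=> j [j_odd /pent6E /coef_theta_6_12_pent->].
by rewrite -signr_odd; move: j_odd; rewrite dvdzE dvdn2 negbK => ->.
Qed.
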